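(* Let $N\ge1$ and $L=\sum_{i=0}^N a_i(x)\partial_x^i$ with $a_i(x)=\sum_{j=0}^i a_{i,j}x^j$ complex polynomials, $a_0\equiv0$, $a_i\equiv0$ for $i>N$. Suppose there are $\lambda_n\in\mathbb{C}$ ($n\ge0$, $\lambda_0=0$, and $\lambda_n\notin\{0,\lambda_1,\ldots,\lambda_{n-1}\}$ for $n\ge1$) and monic polynomials $P_n(x)=\sum_{i=0}^n b_{n,i}x^i$ of degree $n$ with $\sum_{i=1}^Na_i\partial_x^iP_n=\lambda_nP_n$ for all $n\ge0$ (convention: $b_{m,m}=1$, $b_{m,l}=0$ for $l>m$). Let $(\gamma_n)_{n\ge1}$ be nonzero complex numbers and define $P_0^{(1)}=P_0$ and $P_n^{(1)}=P_n+\gamma_nP_{n-1}$ for $n\ge1$. Assume there is a differential operator $L^{(1)}=\sum_{i=0}^{\widetilde N}a^{(1)}_i(x)\partial_x^i$ with complex polynomial coefficients, $\deg a_i^{(1)}\le i$, of order $\widetilde N\ge N$, such that $L^{(1)}P_n^{(1)}=\lambda_nP_n^{(1)}$ for all $n\ge0$. Then for all integers $n,k$ with $n\ge k>\widetilde N$, $$\sum_{j=0}^{k-1}(-1)^j\left[\sum_{s=1}^N\binom{n-k+j}{s-1}s!\,a_{s,s}\right]b_{n-k+j,n-k}\sum_{r=1}^{k-j}\gamma_{n-k+j+1}\cdots\gamma_{n-k+j+r}\,E_{k,n,j+r-1}=0,$$ where, for $0\le t\le k-1$, $E_{k,n,t}$ is the determinant of the $(k-t-1)\times(k-t-1)$ matrix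 whose $(\rho,c)$ entry ($1\le\rho,c\le k-t-1$) is $b_{n-k+t+1+c,\;n-k+t+\rho}$, and $E_{k,n,k-1}=1$.
   Context: $\partial_x^i$ denotes the $i$-th derivative in $x$. With the convention $b_{m,m}=1$, $b_{m,l}=0$ for $l>m$, the matrix defining $E_{k,n,t}$ is upper Hessenberg with first row $b_{n-k+t+2,n-k+t+1},\ldots,b_{n,n-k+t+1}$, ones on the subdiagonal and zeros below it. *)

From HB Require Import structures.
From mathcomp Require Import all_boot all_order all_algebra.
From mathcomp Require Import reals.
From mathcomp.real_closed Require Import complex.
Set Implicit Arguments. Unset Strict Implicit. Unset Printing Implicit Defensive.
Import Order.TTheory GRing.Theory Num.Theory.
Local Open Scope ring_scope.

Definition diffop (F : nzRingType) (M : nat) (c : nat -> {poly F}) (p : {poly F})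
  : {poly F} := \sum_(0 <= i < M.+1) c i * p^`(i).

(* E_{k,n,t}(b) : determinant of the (k-t-1)x(k-t-1) matrix with (rho,c) entry
   (1-based) b_{n-k+t+1+c, n-k+t+rho}; 0-based i = rho-1, j = c-1.
   For t = k-1 the matrix is empty and the determinant is 1. *)
Definition Edet (F : comNzRingType) (b : nat -> nat -> F) (k n t : nat) : F :=
  \det (\matrix_(i < k - t - 1, j < k - t - 1)
          b (n - k + t + 2 + j)%N (n - k + t + 1 + i)%N).

From HB Require Import structures.
From mathcomp Require Import all_boot all_order all_algebra zify ring.
From mathcomp Require Import reals.
From mathcomp.real_closed Require Import complex.

(* The coefficient array b_{m,l} of the monic basis P_m is unitriangular, and its
   inverse is given by Hessenberg determinants:
   x^n = sum_l (-1)^(n-l) hdet_b(l, n-l) P_l, with hdet_b(p, d) = det (b_{p+1+j,p+i})_{i,j<d}.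
   As the P^(1)_m = P_m + gam_m P_(m-1) are eigenvectors of L^(1), induction on l gives
   L^(1) P_l = lam_l P_l + sum_(m<l) c_(l,m) P_m with
   c_(l,m) = (-1)^(l-m+1) gam_(m+1)...gam_l (lam_(m+1) - lam_m).
   Every term a_i d^i x^n is a multiple of x^(n-i), so neither L nor L^(1) produces
   monomials of degree below n - Nt from x^n, and the coefficient of x^(n-k) in
   (L^(1) - L) x^n vanishes; expanding x^n in the basis turns this into the identity, where
   lam_(m+1) - lam_m = sum_s C(m, s-1) s! a_(s,s) is read off from the leading
   coefficients of L P_m = lam_m P_m. *)

Set Implicit Arguments.
Unset Strict Implicit.
Unset Printing Implicit Defensive.

Import Order.TTheory GRing.Theory Num.Theory.
Local Open Scope ring_scope.

Lemma signr_addn_double (R : pzRingType) (e j : nat) : (-1) ^+ (e + j.*2) = (-1) ^+ e :> R.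
Proof. by rewrite -signr_odd oddD odd_double addbF signr_odd. Qed.

Lemma ffactS_bin m s : (m.+1 ^_ s.+1 = m ^_ s.+1 + 'C(m, s) * s.+1`!)%N.
Proof. by rewrite -!bin_ffact binS mulnDl. Qed.

Lemma sum_nat_triangle (V : nmodType) (f : nat -> nat -> V) n :
  \sum_(0 <= l < n.+1) \sum_(0 <= m < l) f l m =
  \sum_(0 <= m < n.+1) \sum_(1 <= r < (n - m).+1) f (m + r)%N m.
Proof.
elim: n => [|n IH]; first by rewrite !big_nat1 !big_geq.
rewrite big_nat_recr //= IH [RHS]big_nat_recr //= subnn [X in _ = _ + X]big_geq // addr0.
rewrite -big_split /=; apply: eq_big_nat => m /andP[_ lt_mn].
rewrite subSn // [RHS]big_nat_recr /=; last by lia.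
by rewrite addnS subnKC.
Qed.

Section Hessenberg.
Variables (F : comNzRingType) (b : nat -> nat -> F).

Definition hdet p d := \det (\matrix_(i < d, j < d) b (p.+1 + j)%N (p + i)%N).

Definition hdet_top r p d :=
  \det (\matrix_(i < d, j < d) b (p.+1 + j)%N (if i == 0 :> nat then r else p + i)%N).

Lemma EdetE k n t : Edet b k n t = hdet (n - k + t + 1) (k - t - 1).
Proof. by congr (\det _); apply/matrixP => i j; rewrite !mxE; congr b; lia. Qed.

Hypotheses (b_diag : forall m, b m m = 1) (b_upper : forall m l, (m < l)%N -> b m l = 0).

Lemma hdet_topS r p d :
  hdet_top r p d.+2 = b p.+1 r * hdet p.+1 d.+1 - hdet_top r p.+1 d.+1.
Proof.
rewrite /hdet_top (expand_det_col _ ord0) !big_ord_recl big1 => [|i _]; last first.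
  by rewrite !mxE /= b_upper ?mul0r //=; rewrite /bump /=; lia.
rewrite addr0 !mxE /= addn0 /cofactor /= expr0 mul1r addn1 b_diag mul1r expr1 mulN1r.
rewrite /hdet; congr (_ * _ - _); congr (\det _); apply/matrixP => i j; rewrite !mxE /=; congr b.
all: rewrite /bump /=; case: (nat_of_ord i) => [|i'] /=; lia.
Qed.

Lemma hdet_top_expand d r p : hdet_top r p d.+1 =
  \sum_(0 <= l < d.+1) (-1) ^+ l * b (p.+1 + l)%N r * hdet (p.+1 + l)%N (d - l).
Proof.
elim: d r p => [|d IH] r p.
  by rewrite big_nat1 /hdet_top /hdet det_mx11 det_mx00 mxE /= !addn0 mul1r mulr1.
rewrite hdet_topS IH [RHS]big_nat_recl // addn0 subn0 expr0 mul1r -sumrN; congr (_ + _).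
by apply: eq_bigr => l _; rewrite -addSnnS exprS subSS !mulN1r !mulNr.
Qed.

Lemma hdet_expand p d : hdet p d.+1 =
  \sum_(0 <= l < d.+1) (-1) ^+ l * b (p.+1 + l)%N p * hdet (p.+1 + l)%N (d - l).
Proof.
rewrite -hdet_top_expand; congr (\det _); apply/matrixP => i j; rewrite !mxE.
by case: eqP => // ->; rewrite addn0.
Qed.

Lemma sum_hdet_coef n q :
  \sum_(0 <= l < n.+1) (-1) ^+ (n - l) * hdet l (n - l) * b l q = (q == n)%:R.
Proof.
have [le_qn|lt_nq] := leqP q n; last first.
  rewrite gtn_eqF // big_nat big1 // => l /andP[_ lt_ln].
  by rewrite b_upper ?mulr0 //; apply: leq_trans lt_nq.
rewrite -(subnK le_qn); move: (n - q)%N => d {le_qn n}.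
rewrite (big_cat_nat (leq0n q)) /=; last by lia.
rewrite big_nat big1 ?add0r => [|l /andP[_ lt_lq]]; last by rewrite b_upper ?mulr0.
rewrite big_ltn ?ltnS ?leq_addl // addnK b_diag mulr1.
case: d => [|d]; first by rewrite big_geq // /hdet det_mx00 mulr1 addr0 eqxx.
rewrite ltn_eqF; last by lia.
rewrite hdet_expand mulr_sumr (big_addn 0 _ q.+1) subSS addnK.
rewrite -big_split big_nat big1 //= => i; rewrite ltnS => le_id.
have -> : (d.+1 + q - (i + q.+1) = d - i)%N by lia.
have sign : (-1) ^+ d.+1 * (-1) ^+ i = - (-1) ^+ (d - i) :> F.
  by rewrite -exprD addSn exprS mulN1r (_ : d + i = d - i + i.*2)%N ?signr_addn_double //; lia.
by rewrite (addnC i) mulrA mulrA sign !mulNr (mulrAC _ (b _ _)) addNr.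
Qed.

End Hessenberg.

Section ShiftedEigenvectors.
Variables (F : comNzRingType) (V : lmodType F) (T : {linear V -> V}).
Variables (Q : nat -> V) (lam gam : nat -> F).

Definition shift_coef l m :=
  (-1) ^+ (l - m).+1 * \prod_(1 <= q < (l - m).+1) gam (m + q)%N * (lam m.+1 - lam m).

Lemma shift_coefS l m : (m <= l)%N -> shift_coef l.+1 m = - gam l.+1 * shift_coef l m.
Proof.
move=> le_ml; rewrite /shift_coef subSn // big_nat_recr //=.
by rewrite addnS subnKC // exprS; ring.
Qed.

Lemma shift_coefnn l : shift_coef l l = lam l - lam l.+1.
Proof. by rewrite /shift_coef subnn big_geq // expr1 mulr1 mulN1r opprB. Qed.

Hypothesis eigen0 : T (Q 0) = lam 0 *: Q 0.
Hypothesis eigenS :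
  forall m, T (Q m.+1 + gam m.+1 *: Q m) = lam m.+1 *: (Q m.+1 + gam m.+1 *: Q m).

Lemma shifted_eigen_expansion l :
  T (Q l) = lam l *: Q l + \sum_(0 <= m < l) shift_coef l m *: Q m.
Proof.
elim: l => [|l IH]; first by rewrite big_geq ?addr0.
have := eigenS l; rewrite linearD linearZZ IH => /(canRL (addrK _)) ->.
have -> : \sum_(0 <= m < l.+1) shift_coef l.+1 m *: Q m =
    - gam l.+1 *: ((lam l - lam l.+1) *: Q l + \sum_(0 <= m < l) shift_coef l m *: Q m).
  rewrite big_nat_recr //= addrC scalerDr scaler_sumr shift_coefS // -shift_coefnn scalerA.
  by congr (_ + _); apply: eq_big_nat => m /andP[_ /ltnW le_ml]; rewrite shift_coefS // scalerA.
rewrite scaleNr !scalerDr opprD !scalerA -!addrA; congr (_ + _).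
by rewrite !addrA -scalerBl opprD -!scaleNr; congr (_ *: _ + _); ring.
Qed.

End ShiftedEigenvectors.

Section DifferentialOperators.
Variable F : comNzRingType.
Implicit Types (c : nat -> {poly F}) (p : {poly F}).

Definition dop (s e : nat) c p : {poly F} := \sum_(s <= i < e) c i * p^`(i).

Fact dop_is_linear s e c : linear (dop s e c).
Proof.
move=> k p q; rewrite /dop scaler_sumr -big_split; apply: eq_bigr => i _.
by rewrite derivnD derivnZ mulrDr scalerAr.
Qed.

HB.instance Definition _ s e c :=
  GRing.isLinear.Build F {poly F} {poly F} _ (dop s e c) (dop_is_linear s e c).

Lemma coef_dop_Xn s e c n q : (q + e <= n)%N -> (dop s e c 'X^n)`_q = 0.
Proof.
move=> le_qen; rewrite coef_sum big_nat big1 // => i /andP[_ lt_ie].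
rewrite derivnXn mulrnAr coefMn coefMXn ifT ?mul0rn //; lia.
Qed.

Lemma coef_mul_derivn (u : {poly F}) p s m : (size u <= s.+1)%N -> (size p <= m.+1)%N ->
  (u * p^`(s))`_m = u`_s * p`_m * (m ^_ s)%:R.
Proof.
move=> size_u size_p; rewrite coefM.
have other j : (j <= m)%N -> j != s -> u`_j * (p^`(s))`_(m - j) = 0.
  move=> le_jm ne_js; case: (ltnP s j) => [lt_sj|le_js].
    by rewrite nth_default ?mul0r // (leq_trans size_u).
  rewrite coef_derivn (nth_default _ (_ : size p <= s + (m - j))%N) ?mul0rn ?mulr0 //.
  by apply: leq_trans size_p _; lia.
have [le_sm|lt_ms] := leqP s m; last first.
  rewrite ffact_small // mulr0 big1 // => j _.
  by rewrite other ?(ltn_eqF (leq_trans (ltn_ord j) lt_ms)) // -ltnS.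
rewrite (bigD1 (Ordinal (le_sm : (s < m.+1)%N))) //= big1 ?addr0 => [|j ne_j]; last first.
  by rewrite other // -ltnS.
by rewrite coef_derivn subnKC // -mulrA mulr_natr.
Qed.

Lemma dop_eigenvalue s e c p lam m : (forall i, (size (c i) <= i.+1)%N) ->
  p \is monic -> size p = m.+1 -> dop s e c p = lam *: p ->
  lam = \sum_(s <= i < e) (c i)`_i * (m ^_ i)%:R.
Proof.
move=> size_c /monicP lead_p size_p eig_p.
have := congr1 (fun q : {poly F} => q`_m) eig_p; rewrite /= coefZ coef_sum.
have p_m : p`_m = 1 by rewrite -lead_p lead_coefE size_p.
rewrite p_m mulr1 => <-; apply: eq_bigr => i _.
by rewrite coef_mul_derivn ?size_p // p_m mulr1.
Qed.

End DifferentialOperators.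

Section MonicBasis.
Variables (F : comNzRingType) (P : nat -> {poly F}).
Hypotheses (P_monic : forall m, P m \is monic) (size_P : forall m, size (P m) = m.+1).

Let b m l := (P m)`_l.

Lemma coefP_diag m : b m m = 1.
Proof. by have /monicP := P_monic m; rewrite lead_coefE size_P. Qed.

Lemma coefP_upper m l : (m < l)%N -> b m l = 0.
Proof. by move=> lt_ml; rewrite /b nth_default // size_P. Qed.

Lemma Xn_expansion n :
  'X^n = \sum_(0 <= l < n.+1) ((-1) ^+ (n - l) * hdet b l (n - l)) *: P l.
Proof.
apply/polyP => q; rewrite coefXn coef_sum -(sum_hdet_coef coefP_diag coefP_upper n q).
by apply: eq_bigr => l _; rewrite coefZ.
Qed.

Variables (S T : {linear {poly F} -> {poly F}}) (lam gam : nat -> F).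
Hypothesis S_eigen : forall m, S (P m) = lam m *: P m.
Hypothesis T_eigen0 : T (P 0) = lam 0 *: P 0.
Hypothesis T_eigenS :
  forall m, T (P m.+1 + gam m.+1 *: P m) = lam m.+1 *: (P m.+1 + gam m.+1 *: P m).

Lemma coef_Xn_eigen_gap n q :
  (T 'X^n - S 'X^n)`_q = \sum_(0 <= l < n.+1) ((-1) ^+ (n - l) * hdet b l (n - l)) *
    \sum_(0 <= m < l) shift_coef lam gam l m * b m q.
Proof.
rewrite (Xn_expansion n) [T _]linear_sum [S _]linear_sum -sumrB coef_sum.
apply: eq_bigr => l _.
rewrite [T _]linearZZ [S _]linearZZ S_eigen (shifted_eigen_expansion T_eigen0 T_eigenS).
rewrite -scalerBr addrAC subrr add0r coefZ coef_sum; congr (_ * _).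
by apply: eq_bigr => m _; rewrite coefZ.
Qed.

End MonicBasis.

Lemma sum_hdet_shift_coef (F : comNzRingType) (b : nat -> nat -> F) (lam gam : nat -> F)
    n k :
  (forall m l, (m < l)%N -> b m l = 0) -> (k <= n)%N ->
  \sum_(0 <= l < n.+1) ((-1) ^+ (n - l) * hdet b l (n - l)) *
    \sum_(0 <= m < l) shift_coef lam gam l m * b m (n - k)%N =
  (-1) ^+ k.+1 * \sum_(0 <= j < k) (-1) ^+ j * (lam (n - k + j).+1 - lam (n - k + j)%N) *
    b (n - k + j)%N (n - k)%N *
    \sum_(1 <= r < (k - j).+1)
      (\prod_(1 <= q < r.+1) gam (n - k + j + q)%N) * Edet b k n (j + r - 1).
Proof.
move=> b_upper le_kn.
under eq_bigr do rewrite mulr_sumr.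
rewrite sum_nat_triangle (big_cat_nat (leq0n (n - k))) //=; last by lia.
rewrite big_nat big1 ?add0r => [|m /andP[_ lt_m]]; last first.
  by apply: big1 => r _; rewrite b_upper ?mulr0.
rewrite (big_addn 0 _ (n - k)) (_ : n.+1 - (n - k) = k.+1)%N; last by lia.
rewrite big_nat_recr //= subnKC // subnn [X in _ + X]big_geq // addr0 mulr_sumr.
apply: eq_big_nat => j /andP[_ lt_jk].
rewrite mulrA mulr_sumr (_ : n - (j + (n - k)) = k - j)%N; last by lia.
apply: eq_big_nat => r /andP[lt0r le_rkj].
rewrite /shift_coef EdetE (addnC j) addKn.
rewrite (_ : n - k + (j + r - 1) + 1 = n - k + j + r)%N; last by lia.
rewrite (_ : k - (j + r - 1) - 1 = n - (n - k + j + r))%N; last by lia.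
have sign : (-1) ^+ (n - (n - k + j + r)) * (-1) ^+ r.+1 = (-1) ^+ k.+1 * (-1) ^+ j :> F.
  rewrite -!exprD (_ : k.+1 + j = n - (n - k + j + r) + r.+1 + j.*2)%N.
    by rewrite signr_addn_double.
  by lia.
by rewrite !mulrA -sign; ring.
Qed.

Theorem theorem3 (R : realType) (N : nat) (a : nat -> {poly R[i]})
  (lam : nat -> R[i]) (P : nat -> {poly R[i]}) (gam : nat -> R[i])
  (Nt : nat) (a1 : nat -> {poly R[i]}) :
  (1 <= N)%N ->
  (forall i, (size (a i) <= i.+1)%N) ->
  a 0%N = 0 ->
  (forall i, (N < i)%N -> a i = 0) ->
  lam 0%N = 0 ->
  (forall n, (1 <= n)%N -> lam n != 0 /\ (forall m, (1 <= m < n)%N -> lam n != lam m)) ->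
  (forall n, P n \is monic /\ size (P n) = n.+1) ->
  (forall n, \sum_(1 <= i < N.+1) a i * (P n)^`(i) = lam n *: P n) ->
  (forall n, (1 <= n)%N -> gam n != 0) ->
  (N <= Nt)%N ->
  (forall i, (size (a1 i) <= i.+1)%N) ->
  (forall i, (Nt < i)%N -> a1 i = 0) ->
  a1 Nt != 0 ->
  (let P1 := fun n : nat => if n is m.+1 then P n + gam n *: P m else P 0%N in
   forall n, diffop Nt a1 (P1 n) = lam n *: P1 n) ->
  let b := fun m l : nat => (P m)`_l in
  forall n k : nat, (Nt < k)%N -> (k <= n)%N ->
    \sum_(0 <= j < k)
      (-1) ^+ j
      * (\sum_(1 <= s < N.+1) ('C(n - k + j, s.-1))%:R * (s`!)%:R * (a s)`_s)
      * b (n - k + j)%N (n - k)%N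
      * \sum_(1 <= r < (k - j).+1)
          (\prod_(1 <= q < r.+1) gam (n - k + j + q)%N)
          * Edet b k n (j + r - 1)%N
    = 0.
Proof.
move=> _ size_a _ _ _ _ P_basis eigP _ le_N_Nt _ _ _ eigP1 b n k lt_Nt_k le_kn.
have P_monic m : P m \is monic := (P_basis m).1.
have size_P m : size (P m) = m.+1 := (P_basis m).2.
have lam_step m : \sum_(1 <= s < N.+1) 'C(m, s.-1)%:R * s`!%:R * (a s)`_s = lam m.+1 - lam m.
  rewrite (dop_eigenvalue size_a (P_monic m.+1) (size_P _) (eigP _)).
  rewrite (dop_eigenvalue size_a (P_monic m) (size_P _) (eigP _)) -sumrB.
  apply: eq_big_nat => -[|s] // _.
  by rewrite ffactS_bin natrD natrM mulrDr addrAC subrr add0r mulrC.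
have gap := coef_Xn_eigen_gap P_monic size_P (S := dop 1 N.+1 a) (T := dop 0 Nt.+1 a1)
  eigP (eigP1 0%N) (fun m => eigP1 m.+1) n (n - k).
rewrite coefB !coef_dop_Xn ?subrr ?sum_hdet_shift_coef // in gap; [|exact: coefP_upper|lia|lia].
apply: (can_inj (signrMK k.+1)); rewrite mulr0 [RHS]gap; congr (_ * _).
by apply: eq_big_nat => j _; rewrite lam_step.
Qed.
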